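(* Let $T>0$. Define $\lambda(T)$ by $$\lambda(T)=\begin{cases}\dfrac{-q+\sqrt{q^2-4pr}}{2p} & \text{if } w^*_b\neq\tfrac12,\\[2mm] \dfrac{4\sum_{i\in\mathcal{K}'}I_i\log I_i+T+S}{2\sum_{i\in\mathcal{K}'}I_i} & \text{if } w^*_b=\tfrac12,\end{cases}$$ (where in the first case it is assumed that $q^2-4pr\ge0$), and define $W(T)=(W_1(T),\dots,W_k(T))$ by $W_i(T)=w^*_i\,\frac{\lambda(T)-2\log I_i}{1+T/S}$ for $i\in\mathcal{K}'$ and $W_b(T)=\sigma_b\sqrt{\sum_{i\in\mathcal{K}'}W_i(T)^2/\sigma_i^2}$. Let $I_{\max}=\max_{i\in\mathcal{K}'}I_i$ and $$T_1=2\sum_{i\in\mathcal{K}'}\Big[\frac{\sigma_b^2I_i^2}{\sigma_i^2(S-I_b)}-I_i\Big]\log\frac{I_{\max}}{I_i}-S,$$ $$T_2=2\sum_{i\in\mathcal{K}'}I_i\log\frac{I_{\max}}{I_i}+2\sigma_b\sqrt{\sum_{i\in\mathcal{K}'}\frac{I_i^2}{\sigma_i^2}\Big(\log\frac{I_{\max}}{I_i}\Big)^2}-S,$$ $$T_0=\begin{cases}\max\{T_1,T_2\}&\text{if } w^*_b\ne\tfrac12,\\ 4\sum_{i\in\mathcal{K}'}I_i\log\frac{I_{\max}}{I_i}-S&\text{if } w^*_b=\tfrac12.\end{cases}$$ If $T\ge T_0$, then $W_i(T)\ge0$ for all $i\in\mathcal{K}$.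
   Context: Let $k\ge 2$ and $\mathcal{K}=\{1,\dots,k\}$. For each $i\in\mathcal{K}$ fix real numbers $\mu_i$ and $\sigma_i>0$. Let $b\in\mathcal{K}$ be the unique index with $\mu_b<\mu_i$ for all $i\neq b$, and let $\mathcal{K}'=\mathcal{K}\setminus\{b\}$. For $i\in\mathcal{K}'$ put $\delta_{i,b}=\mu_i-\mu_b>0$ and $I_i=\sigma_i^2/\delta_{i,b}^2$; put $I_b=\sigma_b\sqrt{\sum_{i\in\mathcal{K}'}I_i^2/\sigma_i^2}$, $S=\sum_{i\in\mathcal{K}}I_i$, and $w^*_i=I_i/S$ for $i\in\mathcal{K}$. Define $p=S(2I_b-S)$, $q=-4\sigma_b^2\sum_{i\in\mathcal{K}'}\frac{I_i^2\log I_i}{\sigma_i^2}+2(S-I_b)\big(2\sum_{i\in\mathcal{K}'}I_i\log I_i+T+S\big)$, $r=4\sigma_b^2\sum_{i\in\mathcal{K}'}\frac{I_i^2\log^2I_i}{\sigma_i^2}-\big(2\sum_{i\in\mathcal{K}'}I_i\log I_i+T+S\big)^2$. *)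

From mathcomp Require Import all_boot all_order all_algebra.
From mathcomp Require Import reals exp.
Set Implicit Arguments. Unset Strict Implicit. Unset Printing Implicit Defensive.
Import Order.TTheory GRing.Theory Num.Theory.
Local Open Scope ring_scope.

Section Defs.
Variable R : realType.
Variable k : nat.
Variables (mu sigma : 'I_k -> R) (b : 'I_k).

Definition delta (i : 'I_k) : R := mu i - mu b.
Definition Ia (i : 'I_k) : R := sigma i ^+ 2 / delta i ^+ 2.
Definition Ib : R :=
  sigma b * Num.sqrt (\sum_(i < k | i != b) Ia i ^+ 2 / sigma i ^+ 2).
Definition II (i : 'I_k) : R := if i == b then Ib else Ia i.
Definition SS : R := \sum_(i < k) II i.
Definition wstar (i : 'I_k) : R := II i / SS.

Definition pp : R := SS * (2 * Ib - SS).
Definition Aux (T : R) : R :=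
  2 * (\sum_(i < k | i != b) II i * ln (II i)) + T + SS.
Definition qq (T : R) : R :=
  - 4 * sigma b ^+ 2 * (\sum_(i < k | i != b) II i ^+ 2 * ln (II i) / sigma i ^+ 2)
  + 2 * (SS - Ib) * Aux T.
Definition rr (T : R) : R :=
  4 * sigma b ^+ 2 * (\sum_(i < k | i != b) II i ^+ 2 * ln (II i) ^+ 2 / sigma i ^+ 2)
  - Aux T ^+ 2.

Definition lambda (T : R) : R :=
  if wstar b != 2^-1 then
    (- qq T + Num.sqrt (qq T ^+ 2 - 4 * pp * rr T)) / (2 * pp)
  else
    (4 * (\sum_(i < k | i != b) II i * ln (II i)) + T + SS)
      / (2 * (\sum_(i < k | i != b) II i)).

Definition Wa (T : R) (i : 'I_k) : R :=
  wstar i * (lambda T - 2 * ln (II i)) / (1 + T / SS).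
Definition W (T : R) (i : 'I_k) : R :=
  if i == b then sigma b * Num.sqrt (\sum_(j < k | j != b) Wa T j ^+ 2 / sigma j ^+ 2)
  else Wa T i.

(* I_max = max_{i in K'} I_i  (all I_i > 0, so 0 is a neutral seed) *)
Definition Imax : R := \big[Num.max/0]_(i < k | i != b) II i.

Definition T1 : R :=
  2 * (\sum_(i < k | i != b)
         (sigma b ^+ 2 * II i ^+ 2 / (sigma i ^+ 2 * (SS - Ib)) - II i)
         * ln (Imax / II i)) - SS.
Definition T2 : R :=
  2 * (\sum_(i < k | i != b) II i * ln (Imax / II i))
  + 2 * sigma b * Num.sqrt (\sum_(i < k | i != b)
                              II i ^+ 2 / sigma i ^+ 2 * ln (Imax / II i) ^+ 2)
  - SS.
Definition T0 : R :=
  if wstar b != 2^-1 then Num.max T1 T2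
  else 4 * (\sum_(i < k | i != b) II i * ln (Imax / II i)) - SS.

End Defs.

(* For i <> b we have W_i(T) = w*_i (lambda(T) - 2 ln I_i) / (1 + T/S), and
   W_b(T) is a square root, hence nonnegative.  Since every I_i (i <> b) is
   positive and at most I_max, it suffices to show lambda(T) >= 2 ln I_max.
   Write M = ln I_max and P = sum_{i<>b} I_i.
   - If w*_b = 1/2, lambda(T) is an explicit quotient by 2P > 0 and the
     hypothesis T >= T_0 is exactly the inequality lambda(T) >= 2M.
   - Otherwise lambda(T) is the larger root of p x^2 + q x + r.  A point L
     with p L^2 + q L + r <= 0 and 2 p L + q >= 0 lies below that root
     (lemma [le_quadratic_root]). *)
From mathcomp Require Import all_boot all_order all_algebra.
From mathcomp Require Import reals exp.
From mathcomp Require Import ring lra.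
Import Order.TTheory GRing.Theory Num.Theory.
Local Open Scope ring_scope.

Lemma le_quadratic_root (R : realFieldType) (p q r s L : R) :
  p != 0 -> 0 <= s -> s ^+ 2 = q ^+ 2 - 4 * p * r ->
  p * L ^+ 2 + q * L + r <= 0 -> 0 <= 2 * p * L + q ->
  L <= (- q + s) / (2 * p).
Proof.
move=> p0 s0 sE fL dL.
have key : (2 * p * L + q) ^+ 2 = s ^+ 2 + 4 * p * (p * L ^+ 2 + q * L + r).
  by rewrite sE; ring.
case: (ltgtP p 0) => hp; last by rewrite hp eqxx in p0.
- rewrite ler_ndivlMr; last by lra.
  suff : s <= 2 * p * L + q by lra.
  nra.
- rewrite ler_pdivlMr; last by lra.
  suff : 2 * p * L + q <= s by lra.
  nra.
Qed.

Lemma sqr_le_of_mul_sqrt (R : rcfType) (a X g : R) :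
  0 <= a -> 0 <= X -> a * Num.sqrt X <= g -> a ^+ 2 * X <= g ^+ 2.
Proof.
move=> a0 X0 hg.
have h0 : 0 <= a * Num.sqrt X by rewrite mulr_ge0 ?sqrtr_ge0.
have -> : a ^+ 2 * X = (a * Num.sqrt X) ^+ 2 by rewrite exprMn sqr_sqrtr.
by rewrite ler_sqr // nnegrE; apply: le_trans hg.
Qed.

Section OptimalAllocation.
Variables (R : realType) (k : nat) (mu sigma : 'I_k -> R) (b : 'I_k).
Hypothesis sigma_gt0 : forall i, 0 < sigma i.
Hypothesis mu_b_min : forall i, i != b -> mu b < mu i.

Local Notation I := (II mu sigma b).
Local Notation Imax := (Imax mu sigma b).
Local Notation Ib := (Ib mu sigma b).
Local Notation S := (SS mu sigma b).
Local Notation M := (ln Imax).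
Local Notation P := (\sum_(i < k | i != b) I i).
Local Notation B2 := (\sum_(i < k | i != b) I i ^+ 2 / sigma i ^+ 2).
Local Notation Q := (\sum_(i < k | i != b) I i * ln (I i)).
Local Notation C := (\sum_(i < k | i != b) I i ^+ 2 * ln (I i) / sigma i ^+ 2).
Local Notation E :=
  (\sum_(i < k | i != b) I i ^+ 2 * ln (I i) ^+ 2 / sigma i ^+ 2).

Lemma I_gt0 {j : 'I_k} : j != b -> 0 < I j.
Proof.
move=> hj; rewrite /II (negbTE hj) /Ia /delta.
have := mu_b_min j hj; have := sigma_gt0 j => h1 h2.
by apply: divr_gt0; apply: exprn_gt0; lra.
Qed.

Lemma IbE : Ib = sigma b * Num.sqrt B2.
Proof.
rewrite /Ib; congr (_ * Num.sqrt _); apply: eq_bigr => j hj.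
by rewrite /II (negbTE hj).
Qed.

Lemma Ib_ge0 : 0 <= Ib.
Proof. by rewrite IbE mulr_ge0 ?sqrtr_ge0 // ltW. Qed.

Lemma Ib_sqr : Ib ^+ 2 = sigma b ^+ 2 * B2.
Proof.
rewrite IbE exprMn sqr_sqrtr //.
by apply: sumr_ge0 => j _; rewrite divr_ge0 ?sqr_ge0.
Qed.

Lemma SSE : S = Ib + P.
Proof. by rewrite /SS (bigD1 b) //= /II eqxx. Qed.

Lemma le_Imax {j : 'I_k} : j != b -> I j <= Imax.
Proof. by move=> hj; rewrite /Imax (bigD1 j) //= le_max lexx. Qed.

Lemma Imax_gt0 {j : 'I_k} : j != b -> 0 < Imax.
Proof. by move=> hj; exact: lt_le_trans (I_gt0 hj) (le_Imax hj). Qed.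

Lemma ln_le_lnImax {j : 'I_k} : j != b -> ln (I j) <= M.
Proof.
by move=> hj; rewrite ler_ln ?posrE ?le_Imax ?I_gt0 ?(Imax_gt0 hj).
Qed.

Lemma ln_Imax_div {j : 'I_k} : j != b -> ln (Imax / I j) = M - ln (I j).
Proof. by move=> hj; rewrite ln_div ?posrE ?I_gt0 ?(Imax_gt0 hj). Qed.

Lemma sum_I_ln_ratio :
  \sum_(i < k | i != b) I i * ln (Imax / I i) = M * P - Q.
Proof.
rewrite mulr_sumr -sumrB; apply: eq_bigr => j hj.
by rewrite ln_Imax_div //; ring.
Qed.

Lemma sum_I2_ln_ratio2 :
  \sum_(i < k | i != b) I i ^+ 2 / sigma i ^+ 2 * ln (Imax / I i) ^+ 2
  = M ^+ 2 * B2 - 2 * M * C + E.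
Proof.
rewrite !mulr_sumr -sumrB -big_split; apply: eq_bigr => j hj.
by rewrite /= ln_Imax_div //; have sj := sigma_gt0 j; field; lra.
Qed.

(* M B2 - C is a nonnegative combination of the M - ln I_i. *)
Lemma MB2_sub_C_ge0 : 0 <= M * B2 - C.
Proof.
have -> : M * B2 - C
    = \sum_(i < k | i != b) I i ^+ 2 / sigma i ^+ 2 * (M - ln (I i)).
  rewrite mulr_sumr -sumrB; apply: eq_bigr => j hj.
  by have sj := sigma_gt0 j; field; lra.
apply: sumr_ge0 => j hj; rewrite mulr_ge0 ?divr_ge0 ?sqr_ge0 //.
by rewrite subr_ge0 ln_le_lnImax.
Qed.

Section QuadraticAtTwoM.
Variable T : R.

(* The slack g of T over the linear part of T_2, and the quantity X under
   the square root in T_2. *)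
Local Notation g := (T + S - 2 * (M * P - Q)).
Local Notation X := (M ^+ 2 * B2 - 2 * M * C + E).

(* Value and derivative of p x^2 + q x + r at x = 2M; the defect
   I_b^2 - sigma_b^2 B2 of the naive identity vanishes by [Ib_sqr]. *)
Lemma quadratic_at_2M :
  pp mu sigma b * (2 * M) ^+ 2 + qq mu sigma b T * (2 * M) + rr mu sigma b T
  = 4 * sigma b ^+ 2 * X - g ^+ 2.
Proof.
have -> : pp mu sigma b * (2 * M) ^+ 2 + qq mu sigma b T * (2 * M)
          + rr mu sigma b T
    = 4 * sigma b ^+ 2 * X - g ^+ 2 + 4 * M ^+ 2 * (Ib ^+ 2 - sigma b ^+ 2 * B2).
  by rewrite /pp /qq /rr /Aux SSE; ring.
by rewrite Ib_sqr subrr mulr0 addr0.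
Qed.

Lemma derivative_at_2M :
  2 * pp mu sigma b * (2 * M) + qq mu sigma b T
  = 4 * sigma b ^+ 2 * (M * B2 - C) + 2 * P * g.
Proof.
have -> : 2 * pp mu sigma b * (2 * M) + qq mu sigma b T
    = 4 * sigma b ^+ 2 * (M * B2 - C) + 2 * P * g
      + 4 * M * (Ib ^+ 2 - sigma b ^+ 2 * B2).
  by rewrite /pp /qq /Aux SSE; ring.
by rewrite Ib_sqr subrr mulr0 addr0.
Qed.

End QuadraticAtTwoM.

Hypothesis k_ge2 : (2 <= k)%N.

Lemma exists_ne_b : exists j : 'I_k, j != b.
Proof.
case: (eqVneq b (Ordinal (ltnW k_ge2))) => hb.
  by exists (Ordinal k_ge2); rewrite hb.
by exists (Ordinal (ltnW k_ge2)); rewrite eq_sym.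
Qed.

Lemma P_gt0 : 0 < P.
Proof.
have [j0 hj0] := exists_ne_b.
rewrite (bigD1 j0) //= ltr_pwDl ?I_gt0 //.
by apply: sumr_ge0 => j /andP [hj _]; apply/ltW/I_gt0.
Qed.

Lemma SS_gt0 : 0 < S.
Proof. by rewrite SSE ltr_wpDl ?Ib_ge0 ?P_gt0. Qed.

Lemma pp_neq0 : wstar mu sigma b b != 2^-1 -> pp mu sigma b != 0.
Proof.
move=> hw; rewrite /pp mulf_neq0 //; first by rewrite gt_eqF ?SS_gt0.
apply: contra hw => /eqP h; rewrite /wstar /II eqxx; apply/eqP.
have -> : Ib = S / 2 by lra.
by field; rewrite gt_eqF ?SS_gt0.
Qed.

Lemma lambda_ge_half (T : R) :
  wstar mu sigma b b = 2^-1 -> T0 mu sigma b <= T ->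
  2 * M <= lambda mu sigma b T.
Proof.
move=> hw; rewrite /T0 /lambda hw eqxx /= sum_I_ln_ratio => hT.
by rewrite ler_pdivlMr; have := P_gt0; lra.
Qed.

Lemma lambda_ge_generic (T : R) :
  wstar mu sigma b b != 2^-1 ->
  0 <= qq mu sigma b T ^+ 2 - 4 * pp mu sigma b * rr mu sigma b T ->
  T0 mu sigma b <= T ->
  2 * M <= lambda mu sigma b T.
Proof.
move=> hw discr_ge0; rewrite /T0 /lambda hw ge_max => /andP [_].
rewrite /T2 sum_I_ln_ratio sum_I2_ln_ratio2 => hT2.
set X := M ^+ 2 * B2 - 2 * M * C + E in hT2.
have X_ge0 : 0 <= X.
  rewrite /X -sum_I2_ln_ratio2; apply: sumr_ge0 => j _.
  by rewrite mulr_ge0 ?divr_ge0 ?sqr_ge0.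
have sigb := sigma_gt0 b.
have sqrtX_ge0 := sqrtr_ge0 X.
set g := T + S - 2 * (M * P - Q).
have g_bound : (2 * sigma b) * Num.sqrt X <= g by rewrite /g; lra.
have g_ge0 : 0 <= g.
  by apply: le_trans g_bound; rewrite mulr_ge0 //; lra.
have g_sqr : (2 * sigma b) ^+ 2 * X <= g ^+ 2.
  by apply: sqr_le_of_mul_sqrt => //; lra.
apply: le_quadratic_root; rewrite ?pp_neq0 ?sqrtr_ge0 ?sqr_sqrtr //.
- rewrite quadratic_at_2M -/X -/g; move: g_sqr; rewrite exprMn; lra.
- rewrite derivative_at_2M -/g.
  have := mulr_ge0 (sqr_ge0 (sigma b)) MB2_sub_C_ge0.
  have := mulr_ge0 (ltW P_gt0) g_ge0.
  lra.
Qed.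

Lemma W_ge0_of_lambda (T : R) :
  0 < T -> 2 * M <= lambda mu sigma b T ->
  forall i, 0 <= W mu sigma b T i.
Proof.
move=> Tpos hlam i; rewrite /W; case: ifP => [_|/negbT hi].
  by rewrite mulr_ge0 ?sqrtr_ge0 // ltW.
have := ln_le_lnImax hi; have := I_gt0 hi; have := SS_gt0 => hS hI hln.
have hTS : 0 < T / S by apply: divr_gt0.
by rewrite /Wa /wstar divr_ge0 ?mulr_ge0 ?invr_ge0 ?(ltW hI) ?(ltW hS) //;
  lra.
Qed.

End OptimalAllocation.

Theorem lemma3 (R : realType) (k : nat) (mu sigma : 'I_k -> R) (b : 'I_k)
  (T : R) :
  (2 <= k)%N ->
  (forall i, 0 < sigma i) ->
  (forall i, i != b -> mu b < mu i) ->
  0 < T ->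
  (wstar mu sigma b b != 2^-1 ->
     0 <= qq mu sigma b T ^+ 2 - 4 * pp mu sigma b * rr mu sigma b T) ->
  T0 mu sigma b <= T ->
  forall i : 'I_k, 0 <= W mu sigma b T i.
Proof.
move=> k_ge2 sigma_gt0 mu_b_min Tpos discr_ge0 hT0.
apply: W_ge0_of_lambda => //.
case: (eqVneq (wstar mu sigma b b) 2^-1) => hw.
- exact: lambda_ge_half.
- exact: lambda_ge_generic (discr_ge0 hw) hT0.
Qed.
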